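(* Let $O=\operatorname{Out}^0(A_\Gamma;\mathcal{G},\mathcal{H}^t)$ with $\mathcal{G}$ saturated with respect to $(\mathcal{G},\mathcal{H})$, let $r=\operatorname{rk}(O)$, $1\le m\le r-1$, and $P\in\mathcal{P}_m(O)$. Then $P$ is itself of the form $\operatorname{Out}^0(A_\Gamma;\mathcal{G}',\mathcal{H}'^t)$ for families $\mathcal{G}',\mathcal{H}'$ of special subgroups with $\mathcal{G}'$ saturated with respect to $(\mathcal{G}',\mathcal{H}')$, and for any such representation one has $\operatorname{rk}(P)=|V(\Gamma)|-|T_{\mathcal{G}'}|=m$.
   Context: $\Gamma$ is a finite simplicial graph with vertex set $V(\Gamma)$. Subgraphs are always full subgraphs and are identified with their vertex sets. $A_\Gamma$ is the right-angled Artin group generated by $V(\Gamma)$ with relations $[v,w]=1$ for adjacent $v,w$. For $\Delta\subseteq\Gamma$, the special subgroup $A_\Delta\le A_\Gamma$ is the subgroup generated by $\Delta$. $\operatorname{lk}(v)$ is the set of vertices adjacent to $v$ and $\operatorname{st}(v)=\operatorname{lk}(v)\cup\{v\}$. An outer automorphism $\Phi$ stabilises a subgroup $H$ if some representative $\phi\in\Phi$ satisfies $\phi(H)=H$, and acts trivially on $H$ if some representative restricts to the identity on $H$. The Laurence generators of $\operatorname{Out}(A_\Gamma)$ are the classes of: inversions $\iota_v$ ($v\mapsto v^{-1}$); transvections $\rho_v^w$ for $v\neq w$ with $\operatorname{lk}(v)\subseteq\operatorname{st}(w)$ ($v\mapsto vw$); partial conjugations $\pi_K^v$ for $K$ a union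 of connected components of $\Gamma\setminus\operatorname{st}(v)$ ($u\mapsto vuv^{-1}$ for $u\in K$); all other generators being fixed. $\operatorname{Out}^0(A_\Gamma)$ is the subgroup of $\operatorname{Out}(A_\Gamma)$ generated by these. For families $\mathcal{G},\mathcal{H}$ of special subgroups, $\operatorname{Out}^0(A_\Gamma;\mathcal{G},\mathcal{H}^t)$ is the subgroup of $\operatorname{Out}^0(A_\Gamma)$ consisting of elements stabilising every member of $\mathcal{G}$ and acting trivially on every member of $\mathcal{H}$. $\mathcal{G}$ is saturated with respect to $(\mathcal{G},\mathcal{H})$ if it contains every proper special subgroup of $A_\Gamma$ stabilised by $\operatorname{Out}^0(A_\Gamma;\mathcal{G},\mathcal{H}^t)$. The $\mathcal{G}$-ordering $\preceq$ on $V(\Gamma)$: $v\preceq w$ iff $\operatorname{lk}(v)\subseteq\operatorname{st}(w)$ and for every $A_\Delta\in\mathcal{G}$ with $v\in\Delta$ also $w\in\Delta$; $v\sim w$ iff $v\preceq w$ and $w\preceq v$; $[v]$ denotes the equivalence class and $T_\mathcal{G}$ the set of classes; $v\prec w$ iff $v\preceq w$ and not $w\preceq v$; $\Gamma_{\succ v}=\{w: v\prec w\}$. The rank is $\operatorname{rk}(O)=|V(\Gamma)|-|T_\mathcal{G}|$. Maximal standard parabolic subgroups: fix an enumeration $[v]=\{v_1,\dots,v_n\}$ of each class; for $1\le j\le n-1$ let $\Delta_v^j$ be the full subgraph on $\{v_1,\dots,v_j\}\cup\Gamma_{\succ v}$; $\mathcal{P}(O)$ is the set of all $\operatorname{Stab}_O(A_{\Delta_v^j})$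 over all classes $[v]\in T_\mathcal{G}$ and $1\le j\le |[v]|-1$. The rank-$m$ standard parabolic subgroups: $\mathcal{P}_m(O)=\{P_1\cap\dots\cap P_{r-m}: P_1,\dots,P_{r-m}\text{ distinct elements of }\mathcal{P}(O)\}$. *)

From Stdlib Require Import Relations.
From HB Require Import structures.
From mathcomp Require Import all_boot.
Set Implicit Arguments. Unset Strict Implicit. Unset Printing Implicit Defensive.

Section RAAG.
Variables (T : finType) (e : rel T).

(* letters: (v, true) = v, (v, false) = v^-1 *)
Definition word := seq (T * bool).
Definition inv_word (w : word) : word := rev (map (fun l => (l.1, ~~ l.2)) w).
Definition gen_word (v : T) : word := [:: (v, true)].

Inductive raag_step : word -> word -> Prop :=
| step_cancel (w1 w2 : word) (a : T) (s : bool) :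
    raag_step (w1 ++ (a, s) :: (a, ~~ s) :: w2) (w1 ++ w2)
| step_comm (w1 w2 : word) (a b : T) (s t : bool) :
    e a b -> raag_step (w1 ++ (a, s) :: (b, t) :: w2) (w1 ++ (b, t) :: (a, s) :: w2).

Definition weq : relation word := clos_refl_sym_trans word raag_step.

(* an endomorphism of A_Gamma given by the images of the generators *)
Definition endo := T -> word.
Definition apply (f : endo) (w : word) : word :=
  flatten (map (fun l => if l.2 then f l.1 else inv_word (f l.1)) w).
Definition comp (f g : endo) : endo := fun a => apply f (g a).
Definition id_endo : endo := gen_word.

Definition lk (v : T) : {set T} := [set w | e v w].
Definition st (v : T) : {set T} := v |: lk v.

(* Laurence generators (and the inverses of transvections / partial
   conjugations; bool s = false gives the inverse) *)
Definition inversion (v : T) : endo :=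
  fun u => if u == v then [:: (v, false)] else gen_word u.
Definition transvection (v w : T) (s : bool) : endo :=
  fun u => if u == v then [:: (v, true); (w, s)] else gen_word u.
Definition partial_conj (v : T) (K : {set T}) (s : bool) : endo :=
  fun u => if u \in K then [:: (v, s); (u, true); (v, ~~ s)] else gen_word u.

Inductive laurence : endo -> Prop :=
| L_inv v : laurence (inversion v)
| L_tr v w (s : bool) : v != w -> lk v \subset st w -> laurence (transvection v w s)
| L_pc v (K : {set T}) (s : bool) : K \subset ~: st v ->
    (forall a b, a \in K -> b \notin st v -> e a b -> b \in K) ->
    laurence (partial_conj v K s).

(* monoid generated by generators and their inverses = group generated *)
Inductive generated : endo -> Prop :=
| gen_id : generated id_endo
| gen_step f g : generated f -> laurence g -> generated (comp f g).

Definition out_eq (f g : endo) : Prop :=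
  exists c : word, forall a, weq (f a) (c ++ g a ++ inv_word c).

Definition inOut0 (f : endo) : Prop := exists g, generated g /\ out_eq f g.

Definition inSpecial (D : {set T}) (x : word) : Prop :=
  exists w : word, all (fun l => l.1 \in D) w /\ weq x w.
Definition inImage (f : endo) (D : {set T}) (x : word) : Prop :=
  exists w : word, all (fun l => l.1 \in D) w /\ weq x (apply f w).

Definition stabilises (f : endo) (D : {set T}) : Prop :=
  exists g, out_eq f g /\ forall x, inImage g D x <-> inSpecial D x.
Definition acts_trivially (f : endo) (D : {set T}) : Prop :=
  exists g, out_eq f g /\ forall a, a \in D -> weq (g a) (gen_word a).

(* Out^0(A_Gamma; G, H^t); families of special subgroups given by vertex sets *)
Definition OutGH (G H : {set {set T}}) (f : endo) : Prop :=
  inOut0 f /\ (forall D, D \in G -> stabilises f D)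
          /\ (forall D, D \in H -> acts_trivially f D).

Definition saturated (G H : {set {set T}}) : Prop :=
  forall D : {set T}, D != setT ->
    (forall f, OutGH G H f -> stabilises f D) -> D \in G.

Definition preceq (G : {set {set T}}) (v w : T) : bool :=
  (lk v \subset st w) && [forall D in G, (v \in D) ==> (w \in D)].
Definition prec G v w := preceq G v w && ~~ preceq G w v.
Definition cls G v : {set T} := [set w | preceq G v w && preceq G w v].
Definition nclasses G := #|[set cls G v | v : T]|.
Definition rk G := #|T| - nclasses G.

(* sigma : an injective numbering of vertices, inducing the enumeration
   of each equivalence class *)
Definition Delta G (sigma : T -> nat) (v : T) (j : nat) : {set T} :=
  [set u | (u \in cls G v) &&
           (#|[set u' in cls G v | sigma u' <= sigma u]| <= j)]
  :|: [set w | prec G v w].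

Definition StabO G H (D : {set T}) (f : endo) : Prop := OutGH G H f /\ stabilises f D.

Definition valid_index G (p : T * nat) : bool :=
  (1 <= p.2) && (p.2 <= #|cls G p.1| - 1).

Definition in_Pm G H (sigma : T -> nat) (m : nat) (P : endo -> Prop) : Prop :=
  exists L : seq (T * nat),
    size L = rk G - m /\ all (valid_index G) L /\
    (forall (d : T * nat) i j, i < size L -> j < size L -> i != j ->
       ~ (forall f, StabO G H (Delta G sigma (nth d L i).1 (nth d L i).2) f
               <-> StabO G H (Delta G sigma (nth d L j).1 (nth d L j).2) f)) /\
    (forall f, P f <-> (forall p, p \in L -> StabO G H (Delta G sigma p.1 p.2) f)).

End RAAG.

(* Such a P is the intersection of the stabilisers in O of distinct special
   subgroups A_Delta_p, p in L, with |L| = rk(O) - m.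
   - P = Out^0(A_Gamma; G u {Delta_p}, H^t) (stabilisers_OutGH), and every
     group Out^0(G, H^t) is also presented by its saturation, the family of
     all special subgroups it stabilises (OutGH_saturation); this gives the
     first half.
   - Any saturated presentation (G', H') of P induces the same ordering as
     F = G u {Delta_p} (preceq_saturated_presentation): members of F lie in G'
     by saturation, and conversely the transvection x -> xy witnesses x <= y,
     because it stabilises A_D exactly when x in D forces y in D (the converse
     direction is a parity count of the letter y, transvection_not_stabilises).
   - Each Delta_v^j cuts one class, [v], between its vertices of rank j and
     j+1, so F has |T_G| + |L| classes (nclasses_GDelta), whence
     rk(P) = |V| - |T_G| - (rk(O) - m) = m. *)

From Stdlib Require Import Relations.
From Pilot Require Import Defs.
From mathcomp Require Import all_boot zify boolp.
Set Implicit Arguments. Unset Strict Implicit. Unset Printing Implicit Defensive.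

Section Words.
Variables (T : finType) (e : rel T).
Hypothesis e_sym : symmetric e.
Implicit Types (f g : endo T) (p q x y : word T) (D : {set T}).

Lemma weq_refl x : weq e x x. Proof. exact: rst_refl. Qed.
Lemma weq_sym x y : weq e x y -> weq e y x. Proof. exact: rst_sym. Qed.
Lemma weq_trans y x z : weq e x y -> weq e y z -> weq e x z.
Proof. exact: rst_trans. Qed.

Lemma raag_step_ctx p q x y :
  raag_step e x y -> raag_step e (p ++ x ++ q) (p ++ y ++ q).
Proof.
case=> [w1 w2 a s|w1 w2 a b s t eab]; rewrite -!catA /= catA [in X in raag_step _ _ X]catA.
- exact: step_cancel.
- exact: step_comm.
Qed.

Lemma weq_ctx p q x y : weq e x y -> weq e (p ++ x ++ q) (p ++ y ++ q).
Proof.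
elim=> [a b ab|a|a b _ IH|a b c _ IH1 _ IH2].
- by apply: rst_step; apply: raag_step_ctx.
- exact: weq_refl.
- exact: weq_sym.
- exact: weq_trans IH2.
Qed.

Lemma weq_cat x x' y y' : weq e x x' -> weq e y y' -> weq e (x ++ y) (x' ++ y').
Proof.
move=> xx' yy'; apply: (@weq_trans (x' ++ y)).
  by have := weq_ctx [::] y xx'.
by have := weq_ctx x' [::] yy'; rewrite !cats0.
Qed.

Lemma inv_word_cat x y : inv_word (x ++ y) = inv_word y ++ inv_word x.
Proof. by rewrite /inv_word map_cat rev_cat. Qed.

Lemma inv_wordK : involutive (@inv_word T).
Proof.
move=> x; rewrite /inv_word map_rev revK -map_comp.
by elim: x => //= [[a s] x ->]; rewrite negbK.
Qed.

Lemma inv_word_cons a s x : inv_word ((a, s) :: x) = inv_word x ++ [:: (a, ~~ s)].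
Proof. by rewrite /inv_word /= rev_cons cats1. Qed.

Lemma weq_inv x y : weq e x y -> weq e (inv_word x) (inv_word y).
Proof.
elim=> [a b ab|a|a b _ IH|a b c _ IH1 _ IH2];
  [|exact: weq_refl|exact: weq_sym|exact: weq_trans IH2].
apply: rst_step; case: ab => [w1 w2 a' s|w1 w2 a' b' s t eab];
  rewrite !inv_word_cat !inv_word_cons -!catA /=.
- by rewrite negbK; apply: step_cancel.
- by apply: step_comm; rewrite e_sym.
Qed.

Lemma apply_cat f x y : apply f (x ++ y) = apply f x ++ apply f y.
Proof. by rewrite /apply map_cat flatten_cat. Qed.

Lemma apply_inv f x : apply f (inv_word x) = inv_word (apply f x).
Proof.
elim: x => [|[a s] x IH] //.
rewrite inv_word_cons apply_cat IH /apply /= cats0 inv_word_cat.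
by case: s; rewrite //= inv_wordK.
Qed.

Lemma apply_comp f g x : apply f (apply g x) = apply (Defs.comp f g) x.
Proof.
elim: x => [|[a s] x IH] //.
by rewrite [apply g _]/apply /= -/(apply g x) apply_cat IH; case: s; rewrite //= apply_inv.
Qed.

Lemma apply_id x : apply (@id_endo T) x = x.
Proof. by elim: x => [|[a s] x IH] //; rewrite /apply /= -/(apply _ x) IH; case: s. Qed.

Lemma apply_weq_on D f g x :
  (forall a, a \in D -> weq e (f a) (g a)) -> all (fun l => l.1 \in D) x ->
  weq e (apply f x) (apply g x).
Proof.
move=> fg; elim: x => [_|[a s] x IH /= /andP [aD xD]]; first exact: weq_refl.
apply: weq_cat (IH xD); case: s; first exact: fg.
by apply: weq_inv; apply: fg.
Qed.

Definition occurrences (v : T) x := count (fun l => l.1 == v) x.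

Lemma occurrences_cat v x y :
  occurrences v (x ++ y) = occurrences v x + occurrences v y.
Proof. exact: count_cat. Qed.

Lemma occurrences_inv v x : occurrences v (inv_word x) = occurrences v x.
Proof. by rewrite /occurrences /inv_word count_rev count_map. Qed.

Lemma weq_odd_occurrences v x y :
  weq e x y -> odd (occurrences v x) = odd (occurrences v y).
Proof.
elim=> [a b ab|a|a b _ IH|a b c _ IH1 _ IH2] //; last by rewrite IH1.
case: ab => [w1 w2 a' s|w1 w2 a' b' s t _]; rewrite !occurrences_cat /occurrences /=.
- by case: (a' == v); rewrite /= ?add0n // !oddD /= negbK.
- by congr (odd (_ + _)); apply: addnCA.
Qed.

End Words.

Lemma out_eq_refl (T : finType) (e : rel T) (f : endo T) : out_eq e f f.
Proof. by exists [::] => a; rewrite /= cats0; apply: weq_refl. Qed.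

Lemma acts_trivially_stabilises (T : finType) (e : rel T) (f : endo T) (D D' : {set T}) :
  symmetric e -> D' \subset D -> acts_trivially e f D -> stabilises e f D'.
Proof.
move=> e_sym sD'D [g [fg g_id]]; exists g; split=> // x.
have g_id' x' : all (fun l => l.1 \in D') x' -> weq e (apply g x') x'.
  move=> x'D'; rewrite -[X in weq _ _ X]apply_id.
  by apply: (apply_weq_on e_sym) x'D' => a aD'; apply: g_id; apply: (subsetP sD'D).
split=> [[x' [x'D' xx']]|[x' [x'D' xx']]]; exists x'; split=> //.
- exact: weq_trans xx' (g_id' x' x'D').
- exact: weq_trans xx' (weq_sym (g_id' x' x'D')).
Qed.

Section Transvection.
Variables (T : finType) (e : rel T).
Hypothesis e_sym : symmetric e.
Variables (u w : T).
Hypothesis u_neq_w : u != w.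
Implicit Types (D : {set T}) (x : word T).
Local Notation tr := (transvection u w true).
Local Notation tr_inv := (transvection u w false).

Lemma transvection_all s D x : (u \in D -> w \in D) ->
  all (fun l => l.1 \in D) x -> all (fun l => l.1 \in D) (apply (transvection u w s) x).
Proof.
move=> uDwD; elim: x => [|[a b] x IH] //= /andP [aD xD].
rewrite [apply _ _]/apply /= -/(apply _ x) all_cat IH // andbT.
have im_a : all (fun l => l.1 \in D) (transvection u w s a).
  rewrite /transvection; case: eqP => [Eau|_] /=; last by rewrite aD.
  by rewrite -Eau aD uDwD // -Eau.
by case: b => //=; rewrite /inv_word all_rev all_map.
Qed.

Lemma transvectionK a : weq e (apply tr (tr_inv a)) (gen_word a).
Proof.
rewrite /transvection; case: eqP => [->|/eqP a_neq_u]; last first.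
  by rewrite /apply /= ifN // cats0; apply: weq_refl.
rewrite /apply /= eqxx eq_sym (negbTE u_neq_w) /=.
exact: rst_step (step_cancel e [:: (u, true)] [::] w true).
Qed.

Lemma stabilises_transvection D : (u \in D -> w \in D) -> stabilises e tr D.
Proof.
move=> uDwD; exists tr; split=> [|x]; first exact: out_eq_refl.
split=> [[x' [x'D xx']]|[x' [x'D xx']]].
  by exists (apply tr x'); split=> //; apply: transvection_all.
exists (apply tr_inv x'); split; first exact: transvection_all.
apply: weq_trans xx' _; rewrite apply_comp -[X in weq _ X]apply_id.
by apply: weq_sym; apply: (@apply_weq_on _ _ e_sym setT) => [a _|];
  [apply: transvectionK | apply/allP => l _; rewrite in_setT].
Qed.

Lemma acts_trivially_transvection D : u \notin D -> acts_trivially e tr D.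
Proof.
move=> uD; exists tr; split=> [|a aD]; first exact: out_eq_refl.
rewrite /transvection; case: eqP => [Eau|_]; last exact: weq_refl.
by rewrite -Eau aD in uD.
Qed.

Lemma inOut0_transvection : lk e u \subset st e w -> inOut0 e tr.
Proof.
move=> lk_st; exists (Defs.comp (@id_endo T) tr); split.
  by apply: gen_step; [apply: gen_id | apply: L_tr].
by exists [::] => a; rewrite /= cats0 /Defs.comp apply_id; apply: weq_refl.
Qed.

(* If u in D but w notin D, no representative of u -> uw preserves A_D: the
   image of u has an odd number of letters w, unlike any word over D. *)
Lemma transvection_not_stabilises D : u \in D -> w \notin D -> ~ stabilises e tr D.
Proof.
move=> uD wD [g [[c tr_g] g_stab]].
have [x [xD gu_x]] : inSpecial e D (g u).
  apply/g_stab; exists [:: (u, true)]; split; first by rewrite /= uD.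
  by rewrite /apply /= cats0; apply: weq_refl.
have x_no_w : occurrences w x = 0.
  by apply/eqP; rewrite eqn0Ngt -has_count; apply/hasPn => l /(allP xD) lD;
     apply/eqP => lw; rewrite -lw lD in wD.
have := weq_odd_occurrences w (weq_trans (tr_g u) (weq_ctx c (inv_word c) gu_x)).
rewrite !occurrences_cat occurrences_inv x_no_w add0n addnn odd_double.
by rewrite /occurrences /transvection eqxx /= (negbTE u_neq_w) eqxx.
Qed.

End Transvection.

Section Ordering.
Variables (T : finType) (e : rel T).
Hypothesis e_sym : symmetric e.
Implicit Types (F : {set {set T}}) (D : {set T}) (u v w x y z : T).

Lemma mem_st x v : (x \in st e v) = (x == v) || e v x.
Proof. by rewrite /st !inE. Qed.

Lemma lk_st_trans u v w :
  lk e u \subset st e v -> lk e v \subset st e w -> lk e u \subset st e w.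
Proof.
move=> /subsetP uv /subsetP vw; apply/subsetP => x xu.
have /uv := xu; rewrite mem_st => /orP [/eqP Exv|vx]; last by apply: vw; rewrite inE.
move: xu; rewrite {x}Exv inE => uv_e.
have /vw : u \in lk e v by rewrite inE e_sym.
rewrite mem_st => /orP [/eqP Euw|wu]; first by rewrite -Euw mem_st uv_e orbT.
have /uv : w \in lk e u by rewrite inE e_sym.
by rewrite !mem_st => /orP [/eqP ->|vw']; rewrite ?eqxx // e_sym vw' orbT.
Qed.

Lemma preceq_refl F v : preceq e F v v.
Proof.
apply/andP; split; last by apply/forall_inP => D _; apply/implyP.
by apply/subsetP => x; rewrite inE mem_st => ->; rewrite orbT.
Qed.

Lemma preceq_trans F u v w : preceq e F u v -> preceq e F v w -> preceq e F u w.
Proof.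
move=> /andP [uv Fuv] /andP [vw Fvw]; rewrite /preceq (lk_st_trans uv vw) /=.
apply/forall_inP => D DF; apply/implyP => uD.
by have /implyP := forall_inP Fvw D DF; apply; have /implyP := forall_inP Fuv D DF; apply.
Qed.

Lemma preceq_sub F F' v w : F \subset F' -> preceq e F' v w -> preceq e F v w.
Proof.
move=> sFF' /andP [vw F'vw]; rewrite /preceq vw /=.
by apply/forall_inP => D DF; apply: (forall_inP F'vw); apply: (subsetP sFF').
Qed.

Lemma preceq_setU1 D F v u :
  preceq e (D |: F) v u = preceq e F v u && ((v \in D) ==> (u \in D)).
Proof.
rewrite /preceq -andbA; congr (_ && _).
apply/forall_inP/andP => [DFvu|[Fvu Dvu] D']; first split.
- by apply/forall_inP => D' D'F; apply: DFvu; rewrite in_setU1 D'F orbT.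
- by apply: DFvu; rewrite in_setU1 eqxx.
- by rewrite in_setU1 => /orP [/eqP ->|]; [| apply: (forall_inP Fvu)].
Qed.

Lemma cls_refl F v : v \in cls e F v.
Proof. by rewrite inE preceq_refl. Qed.

Lemma cls_sym F u v : u \in cls e F v -> v \in cls e F u.
Proof. by rewrite !inE andbC. Qed.

Lemma cls_eq F u v : u \in cls e F v -> cls e F u = cls e F v.
Proof.
rewrite inE => /andP [vu uv]; apply/setP => x; rewrite !inE.
apply/andP/andP => [[ux xu]|[vx xv]]; split.
- exact: preceq_trans vu ux.
- exact: preceq_trans xu uv.
- exact: preceq_trans uv vx.
- exact: preceq_trans xv vu.
Qed.

Lemma cls_trans F x y z : y \in cls e F x -> z \in cls e F y -> z \in cls e F x.
Proof. by move=> /cls_eq ->. Qed.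

Lemma prec_clsl F v v' w : v' \in cls e F v -> prec e F v' w = prec e F v w.
Proof.
rewrite inE => /andP [vv' v'v]; rewrite /prec.
apply/andP/andP => [] [h1 /negP h2]; (split; last apply/negP => h).
- exact: preceq_trans vv' h1.
- by apply: h2; apply: preceq_trans h vv'.
- exact: preceq_trans v'v h1.
- by apply: h2; apply: preceq_trans h v'v.
Qed.

Lemma prec_clsr F v w w' : w' \in cls e F w -> prec e F v w = prec e F v w'.
Proof.
rewrite inE => /andP [ww' w'w]; rewrite /prec.
apply/andP/andP => [] [h1 /negP h2]; (split; last apply/negP => h).
- exact: preceq_trans h1 ww'.
- by apply: h2; apply: preceq_trans ww' h.
- exact: preceq_trans h1 w'w.
- by apply: h2; apply: preceq_trans w'w h.
Qed.

Lemma prec_cls F v u : u \in cls e F v -> prec e F v u = false.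
Proof. by rewrite inE /prec => /andP [_ ->]; rewrite andbF. Qed.

Lemma cls_setU1 D F v :
  cls e (D |: F) v = cls e F v :&: [set u | (u \in D) == (v \in D)].
Proof.
apply/setP => u; rewrite !inE !preceq_setU1.
by case: (u \in D); case: (v \in D); rewrite /= ?andbT ?andbF.
Qed.

Lemma nclasses_le F : nclasses e F <= #|T|.
Proof. exact: leq_imset_card. Qed.

Lemma classes_split D F a b :
  b \in cls e F a -> a \in D -> b \notin D ->
  (forall x y z, y \in cls e F x -> z \in cls e F x -> y \in D -> z \notin D ->
     cls e F x = cls e F a) ->
  [set cls e (D |: F) v | v : T] =
  ([set cls e F v | v : T] :\ cls e F a) :|: [set cls e F a :&: D; cls e F a :&: ~: D].
Proof.
move=> ba aD bD cut_a; set C0 := cls e F a.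
have uncut v : cls e F v != C0 -> cls e (D |: F) v = cls e F v.
  move=> vC0; rewrite cls_setU1; apply/setIidPl/subsetP => u uv; rewrite inE.
  apply: contraR vC0 => uDvD; apply/eqP.
  have [vD|vD] := boolP (v \in D).
  - by apply: (cut_a v v u); rewrite ?cls_refl //; move: uDvD; rewrite vD; case: (u \in D).
  - apply: (cut_a v u v); rewrite ?cls_refl //.
    by move: uDvD; rewrite (negbTE vD); case: (u \in D).
have cls_a : cls e (D |: F) a = C0 :&: D.
  by rewrite cls_setU1 aD; apply/setP => u; rewrite !inE; case: (u \in D).
have cls_b : cls e (D |: F) b = C0 :&: ~: D.
  rewrite cls_setU1 (negbTE bD) (cls_eq ba); apply/setP => u.
  by rewrite !inE; case: (u \in D).
apply/setP => X; apply/imsetP/idP => [[v _ ->]|].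
  have [vC0|vC0] := eqVneq (cls e F v) C0; last first.
    by rewrite uncut // !inE vC0 imset_f.
  rewrite cls_setU1 vC0 !inE; apply/orP; right; apply/orP.
  by case vD: (v \in D); [left|right]; apply/eqP/setP => u; rewrite !inE;
     case: (u \in D); rewrite ?andbT ?andbF.
rewrite !inE => /orP [/andP [XC0 /imsetP [v _ EX]]|/orP [] /eqP ->].
- by exists v => //; rewrite uncut // -EX.
- by exists a.
- by exists b.
Qed.

Lemma nclasses_split D F a b :
  b \in cls e F a -> a \in D -> b \notin D ->
  (forall x y z, y \in cls e F x -> z \in cls e F x -> y \in D -> z \notin D ->
     cls e F x = cls e F a) ->
  nclasses e (D |: F) = (nclasses e F).+1.
Proof.
move=> ba aD bD cut_a; rewrite /nclasses (classes_split ba aD bD cut_a).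
set C0 := cls e F a; set P1 := C0 :&: D; set P2 := C0 :&: ~: D.
set classes := [set cls e F v | v : T].
have aP1 : a \in P1 by rewrite inE cls_refl aD.
have bP2 : b \in P2 by rewrite in_setI in_setC ba bD.
have P1P2 : P1 != P2.
  by apply/eqP => E12; move: aP1; rewrite E12 in_setI in_setC aD andbF.
have disjoint_new : (classes :\ C0) :&: [set P1; P2] = set0.
  apply/setP => X; rewrite !inE; apply/negbTE.
  apply/negP => /andP [/andP [XC0 /imsetP [v _ EX]] /orP H]; subst X.
  move/eqP: XC0; apply; case: H => /eqP E.
  - by have /cls_eq <- : a \in cls e F v by rewrite E.
  - by rewrite /C0 -(cls_eq ba); have /cls_eq <- : b \in cls e F v by rewrite E.
rewrite cardsU disjoint_new cards0 subn0 cards2 P1P2.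
by rewrite (cardsD1 C0 classes) imset_f // add1n addn2.
Qed.

End Ordering.

Section Deltas.
Variables (T : finType) (e : rel T).
Hypothesis e_sym : symmetric e.
Variables (G : {set {set T}}) (sigma : T -> nat).
Hypothesis sigma_inj : injective sigma.
Implicit Types (L : seq (T * nat)) (u v w x y z : T).

Definition rank_in v u := #|[set u' in cls e G v | sigma u' <= sigma u]|.

Lemma rank_in_gt0 v u : u \in cls e G v -> 0 < rank_in v u.
Proof. by move=> uv; apply/card_gt0P; exists u; rewrite inE uv leqnn. Qed.

Lemma rank_in_le v u : rank_in v u <= #|cls e G v|.
Proof. by apply: subset_leq_card; apply/subsetP => x; rewrite inE => /andP []. Qed.

Lemma rank_in_lt v u u' : u \in cls e G v -> u' \in cls e G v ->
  sigma u < sigma u' -> rank_in v u < rank_in v u'.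
Proof.
move=> uv u'v lt_uu'; apply: proper_card; apply/properP; split.
  by apply/subsetP => x; rewrite !inE => /andP [-> /leq_trans]; apply; apply: ltnW.
by exists u'; move: u'v; rewrite !inE => -> /=; rewrite // -ltnNge.
Qed.

Lemma rank_in_inj v u u' : u \in cls e G v -> u' \in cls e G v ->
  rank_in v u = rank_in v u' -> u = u'.
Proof.
move=> uv u'v E; case: (ltngtP (sigma u) (sigma u')) => [lt|lt|]; last exact: sigma_inj.
- by have := rank_in_lt uv u'v lt; rewrite E ltnn.
- by have := rank_in_lt u'v uv lt; rewrite E ltnn.
Qed.

Lemma rank_in_surj v k : 0 < k <= #|cls e G v| ->
  exists2 u, u \in cls e G v & rank_in v u = k.
Proof.
move=> k_range; set ranks := map (rank_in v) (enum (cls e G v)).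
have ranks_uniq : uniq ranks.
  by rewrite map_inj_in_uniq ?enum_uniq // => a b; rewrite !mem_enum; apply: rank_in_inj.
have ranks_sub : {subset ranks <= iota 1 #|cls e G v|}.
  move=> r /mapP [u]; rewrite mem_enum => uv ->.
  by rewrite mem_iota add1n ltnS rank_in_le rank_in_gt0.
have ranks_size : size (iota 1 #|cls e G v|) <= size ranks.
  by rewrite size_iota size_map -cardE.
have [_ ranks_iota] := uniq_min_size ranks_uniq ranks_sub ranks_size.
have : k \in ranks by rewrite ranks_iota mem_iota add1n ltnS.
by case/mapP => u; rewrite mem_enum => uv ->; exists u.
Qed.

Lemma mem_Delta v j u : (u \in Delta e G sigma v j) =
  ((u \in cls e G v) && (rank_in v u <= j)) || prec e G v u.
Proof. by rewrite /Delta in_setU !inE. Qed.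

Lemma Delta_cls v v' j : v' \in cls e G v -> Delta e G sigma v' j = Delta e G sigma v j.
Proof.
move=> v'v; apply/setP => u.
by rewrite !mem_Delta /rank_in (cls_eq e_sym v'v) (prec_clsl e_sym _ v'v).
Qed.

Lemma mem_Delta_in v v' j u : v' \in cls e G v -> u \in cls e G v ->
  (u \in Delta e G sigma v' j) = (rank_in v u <= j).
Proof.
by move=> v'v uv; rewrite (Delta_cls j v'v) mem_Delta uv (prec_cls uv) orbF.
Qed.

Lemma mem_Delta_out v j x y : y \in cls e G x -> x \notin cls e G v ->
  (x \in Delta e G sigma v j) = (y \in Delta e G sigma v j).
Proof.
move=> yx xv; have yv : y \notin cls e G v.
  by apply: (contraNN _ xv) => yv; exact: (cls_trans e_sym yv (cls_sym yx)).
by rewrite !mem_Delta (negbTE xv) (negbTE yv) (prec_clsr e_sym v yx).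
Qed.

Definition Delta_at (p : T * nat) := Delta e G sigma p.1 p.2.

Definition Deltas L : {set {set T}} := [set D | has (fun p => D == Delta_at p) L].
Definition GDelta L := G :|: Deltas L.

Lemma GDelta_nil : GDelta [::] = G.
Proof. by rewrite /GDelta /Deltas; apply/setP => D; rewrite !inE orbF. Qed.

Lemma GDelta_cons p L : GDelta (p :: L) = Delta_at p |: GDelta L.
Proof. by apply/setP => D; rewrite /GDelta /Deltas !inE /= orbCA. Qed.

Lemma cls_GDelta L x u : (u \in cls e (GDelta L) x) =
  (u \in cls e G x) && all (fun p => (u \in Delta_at p) == (x \in Delta_at p)) L.
Proof.
elim: L => [|p L IH]; first by rewrite GDelta_nil andbT.
by rewrite GDelta_cons cls_setU1 in_setI IH in_set; case: (u \in _); rewrite //= andbC.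
Qed.

Lemma cls_GDelta_in L v u u' : u \in cls e G v -> u' \in cls e G v ->
  (u' \in cls e (GDelta L) u) =
  all (fun p => (p.1 \in cls e G v) ==> ((rank_in v u' <= p.2) == (rank_in v u <= p.2))) L.
Proof.
move=> uv u'v; have u'u : u' \in cls e G u by rewrite (cls_eq e_sym uv).
rewrite cls_GDelta u'u; apply: eq_all => p; rewrite /Delta_at.
have [pv|pv] := boolP (p.1 \in cls e G v); first by rewrite !(mem_Delta_in _ pv).
have up : u \notin cls e G p.1.
  by apply: (contraNN _ pv) => up; exact: (cls_trans e_sym uv (cls_sym up)).
by rewrite -(mem_Delta_out _ u'u up) eqxx.
Qed.

(* Adding a new cut Delta_v^j, with 1 <= j < |[v]| and no cut of L at the same
   place, splits exactly one class: the one containing the vertices of rank j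
   and j+1 in [v]. *)
Lemma nclasses_add_Delta L v j : valid_index e G (v, j) ->
  (forall p, p \in L -> p.1 \in cls e G v -> p.2 != j) ->
  nclasses e (Delta e G sigma v j |: GDelta L) = (nclasses e (GDelta L)).+1.
Proof.
rewrite /valid_index /= => j_range fresh.
have [a av ra] : exists2 a, a \in cls e G v & rank_in v a = j.
  by apply: rank_in_surj; lia.
have [b bv rb] : exists2 b, b \in cls e G v & rank_in v b = j.+1.
  by apply: rank_in_surj; lia.
have vv := cls_refl e G v.
apply: (@nclasses_split _ _ e_sym _ _ a b).
- rewrite (cls_GDelta_in _ av bv) ra rb; apply/allP => p pL; apply/implyP => pv.
  by have := fresh p pL pv; lia.
- by rewrite (mem_Delta_in _ vv av) ra.
- by rewrite (mem_Delta_in _ vv bv) rb ltnn.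
(* A class cut by Delta_v^j lies in [v] and has vertices y, z of ranks <= j
   and > j; no cut of L separates them, so none separates them from a. *)
move=> x y z; rewrite !cls_GDelta => /andP [yx y_cuts] /andP [zx z_cuts] yD zD.
have zy : z \in cls e G y by rewrite (cls_eq e_sym yx).
have yv : y \in cls e G v.
  by apply: contraNT zD => yv; rewrite -(mem_Delta_out _ zy yv).
have zv : z \in cls e G v := cls_trans e_sym yv zy.
have xv : x \in cls e G v := cls_trans e_sym yv (cls_sym yx).
rewrite (mem_Delta_in _ vv yv) in yD; rewrite (mem_Delta_in _ vv zv) -ltnNge in zD.
apply: (cls_eq e_sym); rewrite (cls_GDelta_in _ av xv) ra; apply/allP => p pL.
apply/implyP => pv; have /eqP := allP y_cuts p pL; have /eqP := allP z_cuts p pL.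
rewrite /Delta_at !(mem_Delta_in _ pv) //; lia.
Qed.

Lemma nclasses_GDelta L : all (valid_index e G) L -> uniq (map Delta_at L) ->
  nclasses e (GDelta L) = nclasses e G + size L.
Proof.
elim: L => [|[v j] L IH] /=; first by rewrite GDelta_nil addn0.
move=> /andP [vj vL] /andP [vjL uL]; rewrite GDelta_cons addnS -IH //.
apply: nclasses_add_Delta => // p pL pv; apply: contraNneq vjL => pj.
by apply/mapP; exists p; rewrite // /Delta_at -pj (Delta_cls _ pv).
Qed.

End Deltas.

Section Presentations.
Variables (T : finType) (e : rel T).
Hypothesis e_sym : symmetric e.
Implicit Types (F G H : {set {set T}}) (D : {set T}) (f : endo T) (x y : T).

Lemma OutGH_setU G S H f : OutGH e (G :|: S) H f <->
  OutGH e G H f /\ (forall D, D \in S -> stabilises e f D).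
Proof.
split=> [[f0 [fGS fH]]|[[f0 [fG fH]] fS]].
  split=> [|D DS]; last by apply: fGS; rewrite inE DS orbT.
  by split=> //; split=> // D DG; apply: fGS; rewrite inE DG.
by split=> //; split=> // D; rewrite inE => /orP []; [apply: fG | apply: fS].
Qed.

(* If G is saturated and x <=_G y, the transvection x -> xy lies in
   Out^0(G, H^t): it cannot act on a member of H containing x, since then {x}
   would be stabilised, hence in G, contradicting x <=_G y with y != x. *)
Lemma transvection_OutGH G H x y : saturated e G H -> x != y ->
  preceq e G x y -> OutGH e G H (transvection x y true).
Proof.
move=> G_sat xy /andP [xy_lk xy_G].
have xD_yD D : D \in G -> x \in D -> y \in D by move=> DG; apply/implyP/(forall_inP xy_G).
split; first exact: inOut0_transvection.
split=> [D DG|D DH]; first by apply: (stabilises_transvection e_sym xy); apply: xD_yD.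
apply: acts_trivially_transvection; apply: (contraNN _ xy) => xD.
have x_G : [set x] \in G.
  apply: G_sat => [|f [_ [_ fH]]].
    by apply: contraNneq xy => x_all; have := in_setT y; rewrite -x_all inE eq_sym.
  by apply: acts_trivially_stabilises e_sym _ (fH D DH); rewrite sub1set.
by rewrite eq_sym -in_set1; apply: (xD_yD _ x_G); rewrite in_set1.
Qed.

Lemma OutGH_transvection_preceq G H x y : x != y -> lk e x \subset st e y ->
  OutGH e G H (transvection x y true) -> preceq e G x y.
Proof.
move=> xy xy_lk [_ [stab _]]; rewrite /preceq xy_lk.
apply/forall_inP => D DG; apply/implyP => xD; apply/negPn/negP => yD.
exact: (transvection_not_stabilises xy xD yD (stab D DG)).
Qed.

(* A saturated presentation (G', H') of the group Out^0(F, H^t) has the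
   ordering of F, provided the transvections along that ordering lie in the
   group: members of F are stabilised, hence lie in G' by saturation, and
   transvections witness the reverse inequalities. *)
Lemma preceq_saturated_presentation F H G' H' : saturated e G' H' ->
  (forall f, OutGH e G' H' f <-> OutGH e F H f) ->
  (forall x y, x != y -> preceq e F x y -> OutGH e F H (transvection x y true)) ->
  preceq e G' =2 preceq e F.
Proof.
move=> G'_sat same_group F_transvections x y; apply/idP/idP => [/andP [xy_lk xy_G']|xy_F].
  rewrite /preceq xy_lk; apply/forall_inP => D DF; apply/implyP => xD.
  have [->|D_proper] := eqVneq D setT; first exact: in_setT.
  have DG' : D \in G'.
    by apply: G'_sat => // f /same_group [_ [stab _]]; apply: stab.
  exact: implyP (forall_inP xy_G' D DG') xD.
have [<-|xy] := eqVneq x y; first exact: preceq_refl.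
apply: (OutGH_transvection_preceq (H := H') xy); first by case/andP: xy_F.
by apply/same_group; apply: F_transvections.
Qed.

Lemma rk_eq F F' : preceq e F =2 preceq e F' -> rk e F = rk e F'.
Proof.
move=> same; have same_cls : cls e F =1 cls e F'.
  by move=> v; apply/setP => u; rewrite !inE !same.
by rewrite /rk /nclasses (eq_imset _ same_cls).
Qed.

Definition saturation G H : {set {set T}} :=
  [set D | `[< forall f, OutGH e G H f -> stabilises e f D >]].

Lemma OutGH_saturation G H f : OutGH e (saturation G H) H f <-> OutGH e G H f.
Proof.
split=> [[f0 [f_sat fH]]|f_GH]; last first.
  by split; [case: f_GH | split=> [D|]; [rewrite inE => /asboolP; apply | case: f_GH => _ []]].
split=> //; split=> // D DG; apply: f_sat; rewrite inE; apply/asboolP => g [_ [g_G _]].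
exact: g_G.
Qed.

Lemma saturation_saturated G H : saturated e (saturation G H) H.
Proof.
move=> D _ stabD; rewrite inE; apply/asboolP => f /OutGH_saturation; exact: stabD.
Qed.

End Presentations.

Section StandardParabolics.
Variables (T : finType) (e : rel T).
Hypothesis e_sym : symmetric e.
Variables (G H : {set {set T}}) (sigma : T -> nat).
Hypothesis G_sat : saturated e G H.
Implicit Types (L : seq (T * nat)) (P : endo T -> Prop).

Local Notation GDelta := (GDelta e G sigma).
Local Notation Delta_at := (Delta_at e G sigma).

Lemma stabilisers_OutGH L P : L != [::] ->
  (forall f, P f <-> (forall p, p \in L -> StabO e G H (Delta_at p) f)) ->
  forall f, P f <-> OutGH e (GDelta L) H f.
Proof.
case: L => [//|p0 L] _ defP f; rewrite defP OutGH_setU.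
split=> [f_stab|[f_GH f_Deltas] p pL]; last first.
  by split=> //; apply: f_Deltas; rewrite inE; apply/hasP; exists p.
split; first by case: (f_stab p0 (mem_head _ _)).
by move=> D; rewrite inE => /hasP [p pL /eqP ->]; case: (f_stab p pL).
Qed.

Lemma transvection_GDelta L x y : x != y -> preceq e (GDelta L) x y ->
  OutGH e (GDelta L) H (transvection x y true).
Proof.
move=> xy xy_GL; apply/OutGH_setU; split.
  by apply: (transvection_OutGH e_sym G_sat xy); apply: preceq_sub xy_GL; apply: subsetUl.
move=> D DL; apply: (stabilises_transvection e_sym xy); case/andP: xy_GL => _ /forall_inP.
by move=> /(_ D); rewrite inE DL orbT => /(_ isT) /implyP.
Qed.

Lemma uniq_Deltas L : (forall (d : T * nat) i j, i < size L -> j < size L -> i != j ->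
    ~ (forall f, StabO e G H (Delta_at (nth d L i)) f <->
                 StabO e G H (Delta_at (nth d L j)) f)) ->
  uniq (map Delta_at L).
Proof.
case: L => [//|p0 L] distinct; apply/(uniqP set0) => i j; rewrite !inE size_map => iL jL.
rewrite !(nth_map p0) // => same_Delta; apply/eqP; apply: contraT => ij.
by case: (distinct p0 i j iL jL ij) => f; rewrite same_Delta.
Qed.

End StandardParabolics.

Theorem proposition7p4 (T : finType) (e : rel T) :
  symmetric e -> irreflexive e ->
  forall G H : {set {set T}}, saturated e G H ->
  forall sigma : T -> nat, injective sigma ->
  forall m : nat, 1 <= m <= rk e G - 1 ->
  forall P : endo T -> Prop, in_Pm e G H sigma m P ->
  (exists G' H' : {set {set T}},
      saturated e G' H' /\ forall f, P f <-> OutGH e G' H' f) /\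
  (forall G' H' : {set {set T}},
      saturated e G' H' -> (forall f, P f <-> OutGH e G' H' f) -> rk e G' = m).
Proof.
move=> e_sym _ G H G_sat sigma sigma_inj m /andP [m_gt0 m_lt] P.
move=> [L [size_L [valid_L [distinct_L defP]]]].
have L_nonempty : L != [::] by rewrite -size_eq0 size_L; lia.
have P_GDelta := stabilisers_OutGH L_nonempty defP.
split.
  exists (saturation e (GDelta e G sigma L) H), H; split; first exact: saturation_saturated.
  by move=> f; rewrite P_GDelta OutGH_saturation.
move=> G' H' G'_sat defP'.
have same_group f : OutGH e G' H' f <-> OutGH e (GDelta e G sigma L) H f.
  by rewrite -defP' P_GDelta.
rewrite (rk_eq (preceq_saturated_presentation G'_sat same_group
                  (transvection_GDelta e_sym G_sat (L := L)))).
rewrite /rk (nclasses_GDelta e_sym sigma_inj valid_L (uniq_Deltas distinct_L)) size_L.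
by have := nclasses_le e G; move: m_lt; rewrite /rk; lia.
Qed.
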